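(* Let $T$ be a triangle from a shape-regular family ($h_T\le\varrho r_T$), $\Gamma_{h,T}$ an open line segment with endpoints on $\partial T$ dividing $T$ into nonempty open parts $T_h^\pm$, and $\mu^\pm>0$. There is a constant $C>0$ independent of $h_T$ and of the location of $\Gamma_{h,T}$ such that $$h_T\|[\![q_h^\pm]\!]\|^2_{L^2(\Gamma_{h,T})}\le C|\mathbf{v}_h|^2_{H^1(T)}\qquad\forall(\mathbf{v}_h,q_h)\in\mathbf{V}M_h^{IFE}(T),$$ where $[\![q_h^\pm]\!]=q_h^+-q_h^-$.
   Context: $\mathbf{n}_h$ is the unit normal of $\Gamma_{h,T}$ pointing into $T_h^+$; $\sigma(\mu,\mathbf{v},q)=2\mu\boldsymbol{\epsilon}(\mathbf{v})-q\mathbb{I}$, $\boldsymbol{\epsilon}(\mathbf{v})=\frac12(\nabla\mathbf{v}+(\nabla\mathbf{v})^T)$. $\mathbf{V}M_h^{IFE}(T)$ is the set of pairs $(\mathbf{v},q)$ equal to $(\mathbf{v}^\pm,q^\pm)$ on $T_h^\pm$, where $\mathbf{v}^\pm\in P_1(T)^2$, $q^\pm\in P_0(T)$ satisfy $\sigma(\mu^+,\mathbf{v}^+,q^+)\mathbf{n}_h=\sigma(\mu^-,\mathbf{v}^-,q^-)\mathbf{n}_h$, $\mathbf{v}^+=\mathbf{v}^-$ on $\Gamma_{h,T}$, $\nabla\cdot\mathbf{v}^+=\nabla\cdot\mathbf{v}^-$; $q_h^\pm$ denote the constant pieces of $q_h$. *)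

From HB Require Import structures.
From mathcomp Require Import all_boot all_order all_algebra.
From mathcomp Require Import all_classical all_reals all_analysis.
Set Implicit Arguments. Unset Strict Implicit. Unset Printing Implicit Defensive.
Import Order.TTheory GRing.Theory Num.Theory.
Local Open Scope classical_set_scope.
Local Open Scope ring_scope.

Definition xc (R : realType) (u : 'cV[R]_2) : R := u ord0 ord0.
Definition yc (R : realType) (u : 'cV[R]_2) : R := u ord_max ord0.
Definition mkv (R : realType) (a b : R) : 'cV[R]_2 :=
  \col_i (if i == ord0 then a else b).

Definition dotv (R : realType) (u v : 'cV[R]_2) : R := xc u * xc v + yc u * yc v.
Definition normv (R : realType) (u : 'cV[R]_2) : R := Num.sqrt (dotv u u).
Definition rot (R : realType) (u : 'cV[R]_2) : 'cV[R]_2 := mkv (- yc u) (xc u).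

Definition lam2 (R : realType) (S : set 'cV[R]_2) : \bar R :=
  ((@lebesgue_measure R) \x (@lebesgue_measure R))%E
    [set p : R * R | S (mkv p.1 p.2)].
Definition area (R : realType) (S : set 'cV[R]_2) : R := fine (lam2 S).

Definition cseg (R : realType) (a b : 'cV[R]_2) : set 'cV[R]_2 :=
  [set x | exists t : R, 0 <= t <= 1 /\ x = (1 - t) *: a + t *: b].
Definition oseg (R : realType) (a b : 'cV[R]_2) : set 'cV[R]_2 :=
  [set x | exists t : R, 0 < t < 1 /\ x = (1 - t) *: a + t *: b].

Definition tri_det (R : realType) (a b c : 'cV[R]_2) : R :=
  xc (b - a) * yc (c - a) - yc (b - a) * xc (c - a).
Definition tri_nondeg (R : realType) (a b c : 'cV[R]_2) : Prop :=
  tri_det a b c != 0.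
Definition tri (R : realType) (a b c : 'cV[R]_2) : set 'cV[R]_2 :=
  [set x | exists l1 l2 l3 : R, [/\ 0 < l1, 0 < l2, 0 < l3, l1 + l2 + l3 = 1 &
     x = l1 *: a + l2 *: b + l3 *: c]].
Definition tri_bd (R : realType) (a b c : 'cV[R]_2) : set 'cV[R]_2 :=
  cseg a b `|` cseg b c `|` cseg c a.
(* diameter h_T (= longest edge) *)
Definition diam (R : realType) (a b c : 'cV[R]_2) : R :=
  Num.max (normv (b - a)) (Num.max (normv (c - b)) (normv (a - c))).
(* inradius r_T = 2 |T| / perimeter *)
Definition inradius (R : realType) (a b c : 'cV[R]_2) : R :=
  `|tri_det a b c| / (normv (b - a) + normv (c - b) + normv (a - c)).

(* interface segment Gamma = ]p1,p2[, unit normal n_h, and subelements T^+/T^- *)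
Definition nrm (R : realType) (p1 p2 : 'cV[R]_2) : 'cV[R]_2 :=
  (normv (p2 - p1))^-1 *: rot (p2 - p1).
Definition Tplus (R : realType) (a b c p1 p2 : 'cV[R]_2) : set 'cV[R]_2 :=
  [set x | tri a b c x /\ 0 < dotv (x - p1) (nrm p1 p2)].
Definition Tminus (R : realType) (a b c p1 p2 : 'cV[R]_2) : set 'cV[R]_2 :=
  [set x | tri a b c x /\ dotv (x - p1) (nrm p1 p2) < 0].

(* An element v of P_1(T)^2 is x |-> G *m x + w; its gradient is G. *)
Definition epsm (R : realType) (G : 'M[R]_2) : 'M[R]_2 := 2^-1 *: (G + G^T).
Definition sigma (R : realType) (mu : R) (G : 'M[R]_2) (q : R) : 'M[R]_2 :=
  (2 * mu) *: epsm G - q%:M.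

(* (v,q) in VM_h^IFE(T): v = (G^+ x + w^+, G^- x + w^-), q = (q^+, q^-) *)
Definition IFE (R : realType) (mup mum : R) (p1 p2 : 'cV[R]_2)
  (Gp : 'M[R]_2) (wp : 'cV[R]_2) (qp : R)
  (Gm : 'M[R]_2) (wm : 'cV[R]_2) (qm : R) : Prop :=
  [/\ sigma mup Gp qp *m nrm p1 p2 = sigma mum Gm qm *m nrm p1 p2,
      (forall x, oseg p1 p2 x -> Gp *m x + wp = Gm *m x + wm) &
      \tr Gp = \tr Gm].

Definition frob2 (R : realType) (G : 'M[R]_2) : R := \sum_i \sum_j (G i j) ^+ 2.

(* |v|_{H^1(T)}^2 = int_{T^+} |grad v^+|^2 + int_{T^-} |grad v^-|^2 *)
Definition H1semi2 (R : realType) (a b c p1 p2 : 'cV[R]_2) (Gp Gm : 'M[R]_2) : R :=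
  area (Tplus a b c p1 p2) * frob2 Gp + area (Tminus a b c p1 p2) * frob2 Gm.

(* ||[[q]]||^2_{L^2(Gamma)} for piecewise constant q: |Gamma| (q^+ - q^-)^2 *)
Definition jumpL2sq (R : realType) (p1 p2 : 'cV[R]_2) (qp qm : R) : R :=
  normv (p2 - p1) * (qp - qm) ^+ 2.

From Pilot Require Import Defs.
From HB Require Import structures.
From mathcomp Require Import all_boot all_order all_algebra.
From mathcomp Require Import all_classical all_reals all_analysis.
From mathcomp Require Import measurable_realfun ring lra.
Import Order.TTheory GRing.Theory Num.Theory.
Local Open Scope classical_set_scope.
Local Open Scope ring_scope.
Set Implicit Arguments.
Unset Strict Implicit.
Unset Printing Implicit Defensive.

(* The interface conditions control the pressure jump by the gradients G^+, G^- of
   v^+, v^-.  The normal traction condition gives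
   q^+ - q^- = 2 mu^+ n.(G^+ n) - 2 mu^- n.(G^- n).  Continuity of v along Gamma and
   equal divergences make G^+ - G^- a trace-free matrix killing the tangent t, so its
   norm is its t-n shear strain, which the tangential traction condition ties to the
   shear strain of G^+ alone; hence |G^-| <= C |G^+|, and (q^+ - q^-)^2 is bounded by
   K |G^+|^2 and by K |G^-|^2.  On the geometric side, |Gamma| <= h_T, and the square of
   side r_T/6 with a corner at the centroid, pointing along the signs of the coordinates
   of n, lies in T (it stays within r_T/3 of the centroid) and on the side of Gamma
   containing the centroid.  So one of T^+, T^- has area at least
   (r_T/6)^2 >= h_T^2 / (36 rho^2), which turns h_T |Gamma| (q^+ - q^-)^2 <= h_T^2 K |G^s|^2
   into the claimed bound by the H^1 seminorm on that subelement. *)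

(* Without this, [seq.rot] would shadow the rotation of [Defs]. *)
Local Notation rot := Defs.rot.

Section Coordinates.
Variable R : realType.
Implicit Types (u v x : 'cV[R]_2) (A : 'M[R]_2).

Lemma cV2P u v : xc u = xc v -> yc u = yc v -> u = v.
Proof.
move=> ex ey; apply/matrixP => i j; rewrite (ord1 j).
case: i => -[|[|//]] lti; [move: ex | move: ey]; rewrite /xc /yc;
  by congr (u _ _ = v _ _); apply: val_inj.
Qed.

Lemma xc_mkv (a b : R) : xc (mkv a b) = a. Proof. by rewrite /xc mxE. Qed.
Lemma yc_mkv (a b : R) : yc (mkv a b) = b. Proof. by rewrite /yc mxE. Qed.
Lemma xcD u v : xc (u + v) = xc u + xc v. Proof. by rewrite /xc mxE. Qed.
Lemma ycD u v : yc (u + v) = yc u + yc v. Proof. by rewrite /yc mxE. Qed.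
Lemma xcN u : xc (- u) = - xc u. Proof. by rewrite /xc mxE. Qed.
Lemma ycN u : yc (- u) = - yc u. Proof. by rewrite /yc mxE. Qed.
Lemma xcZ (s : R) u : xc (s *: u) = s * xc u. Proof. by rewrite /xc mxE. Qed.
Lemma ycZ (s : R) u : yc (s *: u) = s * yc u. Proof. by rewrite /yc mxE. Qed.
Lemma xc0 : xc (0 : 'cV[R]_2) = 0. Proof. by rewrite /xc mxE. Qed.
Lemma yc0 : yc (0 : 'cV[R]_2) = 0. Proof. by rewrite /yc mxE. Qed.

Lemma widen_ord_max_ord0 : widen_ord (leqnSn 1) ord_max = ord0 :> 'I_2.
Proof. exact: val_inj. Qed.

Lemma mulmx2E A v i : (A *m v) i ord0 = A i ord0 * xc v + A i ord_max * yc v.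
Proof. by rewrite mxE !big_ord_recr big_ord0 /= add0r [widen_ord _ _]widen_ord_max_ord0. Qed.

Lemma xcM A v : xc (A *m v) = A ord0 ord0 * xc v + A ord0 ord_max * yc v.
Proof. exact: mulmx2E. Qed.
Lemma ycM A v : yc (A *m v) = A ord_max ord0 * xc v + A ord_max ord_max * yc v.
Proof. exact: mulmx2E. Qed.

Lemma mxtrace2E A : \tr A = A ord0 ord0 + A ord_max ord_max.
Proof. by rewrite /mxtrace !big_ord_recr big_ord0 /= add0r [widen_ord _ _]widen_ord_max_ord0. Qed.

Lemma frob2E A : frob2 A =
  A ord0 ord0 ^+ 2 + A ord0 ord_max ^+ 2 + A ord_max ord0 ^+ 2 + A ord_max ord_max ^+ 2.
Proof.
by rewrite /frob2 !big_ord_recr !big_ord0 /= !add0r addrA [widen_ord _ _]widen_ord_max_ord0.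
Qed.

Definition coordE := (xc_mkv, yc_mkv, xcD, ycD, xcN, ycN, xcZ, ycZ, xc0, yc0, xcM, ycM).

End Coordinates.

Section EuclideanPlane.
Variable R : realType.
Implicit Types (u v w x y p q : 'cV[R]_2).

Lemma dotv_ge0 u : 0 <= dotv u u.
Proof. by rewrite /dotv -!expr2 addr_ge0 ?sqr_ge0. Qed.

Lemma dotv_gt0 u : u != 0 -> 0 < dotv u u.
Proof.
move=> u0; rewrite lt_def dotv_ge0 andbT; apply: contra u0.
rewrite /dotv -!expr2 => /eqP u2.
have := sqr_ge0 (xc u); have := sqr_ge0 (yc u) => y0 x0.
by apply/eqP; apply: cV2P; rewrite !coordE; apply/eqP;
  rewrite -sqrf_eq0 eq_le sqr_ge0 andbT; lra.
Qed.

Lemma normv_ge0 u : 0 <= normv u. Proof. exact: sqrtr_ge0. Qed.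

Lemma normv_sqr u : normv u ^+ 2 = dotv u u.
Proof. exact/sqr_sqrtr/dotv_ge0. Qed.

Lemma normv0 : normv (0 : 'cV[R]_2) = 0.
Proof. by rewrite /normv /dotv !coordE mulr0 addr0 sqrtr0. Qed.

Lemma normv_distC u v : normv (u - v) = normv (v - u).
Proof. by rewrite /normv /dotv !coordE; congr Num.sqrt; ring. Qed.

Lemma normv_le u (d : R) : 0 <= d -> dotv u u <= d ^+ 2 -> normv u <= d.
Proof. by move=> d0 /ler_wsqrtr; rewrite sqrtr_sqr ger0_norm. Qed.

Lemma normv_lt u (d : R) : 0 < d -> dotv u u < d ^+ 2 -> normv u < d.
Proof.
by move=> d0; rewrite -(ltr_sqrt _ (exprn_gt0 2 d0)) sqrtr_sqr gtr0_norm.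
Qed.

Lemma dotv_rot u : dotv (rot u) (rot u) = dotv u u.
Proof. by rewrite /rot /dotv !coordE; ring. Qed.

Lemma dotv_nrm p q : p != q -> dotv (nrm p q) (nrm p q) = 1.
Proof.
rewrite eq_sym -subr_eq0 => /dotv_gt0 d0.
have -> : dotv (nrm p q) (nrm p q) = (normv (q - p))^-1 ^+ 2 * dotv (rot (q - p)) (rot (q - p)).
  by rewrite /nrm /dotv !coordE; ring.
by rewrite dotv_rot -normv_sqr exprVn mulVf // normv_sqr gt_eqF.
Qed.

Lemma rot_nrm p q : rot (nrm p q) = - (normv (q - p))^-1 *: (q - p).
Proof. by apply: cV2P; rewrite /nrm /rot !coordE; ring. Qed.

Lemma dotv_nrmC p q x : dotv (x - q) (nrm q p) = - dotv (x - p) (nrm p q).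
Proof.
by rewrite /nrm (normv_distC p q) /rot /dotv !coordE; ring.
Qed.

End EuclideanPlane.

(* Twice the strain component t.(eps(G) n), with t = rot n the tangent of the line of
   normal n. *)
Definition shear_strain (R : realType) (n : 'cV[R]_2) (G : 'M[R]_2) : R :=
  dotv (rot n) (G *m n) + dotv n (G *m rot n).

Lemma frob2_ge0 (R : realType) (A : 'M[R]_2) : 0 <= frob2 A.
Proof. by rewrite frob2E !addr_ge0 ?sqr_ge0. Qed.

Lemma frob2_subr_le (R : realType) (A B : 'M[R]_2) :
  frob2 (A - B) <= 2 * frob2 A + 2 * frob2 B.
Proof.
rewrite !frob2E !mxE.
set a1 := A _ _; set a2 := A _ _; set a3 := A _ _; set a4 := A _ _.
set b1 := B _ _; set b2 := B _ _; set b3 := B _ _; set b4 := B _ _.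
have := sqr_ge0 (a1 + b1); have := sqr_ge0 (a2 + b2).
have := sqr_ge0 (a3 + b3); have := sqr_ge0 (a4 + b4); nra.
Qed.

Definition jump_const (R : realType) (mup mum : R) : R :=
  8 * (mup ^+ 2 + mum ^+ 2) * (2 + 4 * ((1 - mup / mum) ^+ 2 + (1 - mum / mup) ^+ 2)).

Lemma jump_constC (R : realType) (mup mum : R) : jump_const mup mum = jump_const mum mup.
Proof. by rewrite /jump_const addrC [_ ^+ 2 + (1 - _) ^+ 2]addrC. Qed.

Lemma jump_const_ge0 (R : realType) (mup mum : R) : 0 <= jump_const mup mum.
Proof.
rewrite /jump_const; apply: mulr_ge0; first by rewrite mulr_ge0 // addr_ge0 ?sqr_ge0.
by rewrite addr_ge0 // mulr_ge0 // addr_ge0 ?sqr_ge0.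
Qed.

Section OrthonormalFrame.
Variables (R : realType) (n : 'cV[R]_2).
Hypothesis n_unit : dotv n n = 1.
Implicit Types (G : 'M[R]_2) (mu q : R).
Local Notation t := (rot n).

Let unitE : xc n ^+ 2 + yc n ^+ 2 = 1.
Proof. by rewrite -n_unit /dotv !expr2. Qed.

Lemma frob2_frame G : frob2 G =
  dotv n (G *m n) ^+ 2 + dotv t (G *m n) ^+ 2 + dotv n (G *m t) ^+ 2 + dotv t (G *m t) ^+ 2.
Proof.
rewrite -[frob2 G]mulr1 -(expr1n _ 2) -unitE frob2E /rot /dotv !coordE; ring.
Qed.

Lemma mxtrace_frame G : \tr G = dotv n (G *m n) + dotv t (G *m t).
Proof. by rewrite -[\tr G]mulr1 -unitE mxtrace2E /rot /dotv !coordE; ring. Qed.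

Lemma normal_strain_sqr_le G : dotv n (G *m n) ^+ 2 <= frob2 G.
Proof. by rewrite frob2_frame -!addrA lerDl !addr_ge0 ?sqr_ge0. Qed.

Lemma shear_strain_sqr_le G : shear_strain n G ^+ 2 <= 2 * frob2 G.
Proof.
rewrite frob2_frame /shear_strain.
set a := dotv n (G *m n); set b := dotv t (G *m n).
set c := dotv n (G *m t); set d := dotv t (G *m t).
have := sqr_ge0 a; have := sqr_ge0 d; have := sqr_ge0 (b - c); nra.
Qed.

Lemma frob2_shear_strain G : G *m t = 0 -> \tr G = 0 -> frob2 G = shear_strain n G ^+ 2.
Proof.
move=> Gt0; rewrite mxtrace_frame frob2_frame /shear_strain Gt0.
have dotv0 u : dotv u 0 = 0 by rewrite /dotv !coordE !mulr0 addr0.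
by rewrite !dotv0 addr0 => ->; rewrite expr0n /= !addr0 add0r.
Qed.

Lemma shear_strainB G G' : shear_strain n (G - G') = shear_strain n G - shear_strain n G'.
Proof. by rewrite /shear_strain /rot /dotv !coordE !mxE; ring. Qed.

Lemma traction_normal mu G q : dotv n (sigma mu G q *m n) = 2 * mu * dotv n (G *m n) - q.
Proof.
rewrite -[q in RHS]mulr1 -[X in q * X]unitE /sigma /epsm /dotv !coordE !mxE /=.
by field.
Qed.

Lemma traction_tangential mu G q : dotv t (sigma mu G q *m n) = mu * shear_strain n G.
Proof.
rewrite /shear_strain /sigma /epsm /rot /dotv !coordE !mxE /=.
by field.
Qed.

Variables (mup mum qp qm : R) (Gp Gm : 'M[R]_2).
Hypothesis mum_gt0 : 0 < mum.
Hypothesis traction_eq : sigma mup Gp qp *m n = sigma mum Gm qm *m n.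

Lemma interface_frob2_le : (Gp - Gm) *m t = 0 -> \tr Gp = \tr Gm ->
  frob2 Gm <= (2 + 4 * (1 - mup / mum) ^+ 2) * frob2 Gp.
Proof.
move=> Dt0 trE.
have shearE : mup * shear_strain n Gp = mum * shear_strain n Gm.
  by rewrite -(traction_tangential _ _ qp) -(traction_tangential _ _ qm) traction_eq.
have frob2D : frob2 (Gp - Gm) = (1 - mup / mum) ^+ 2 * shear_strain n Gp ^+ 2.
  rewrite frob2_shear_strain ?linearB /= ?trE ?subrr // shear_strainB -exprMn.
  congr (_ ^+ 2); apply: (mulfI (lt0r_neq0 mum_gt0)); rewrite mulrBr -shearE.
  by field; rewrite lt0r_neq0.
have := frob2_subr_le Gp (Gp - Gm); rewrite opprB addrC subrK frob2D.
have := shear_strain_sqr_le Gp; have := sqr_ge0 (1 - mup / mum); nra.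
Qed.

Lemma interface_jump_sqr_le :
  (qp - qm) ^+ 2 <= 8 * mup ^+ 2 * frob2 Gp + 8 * mum ^+ 2 * frob2 Gm.
Proof.
have := congr1 (dotv n) traction_eq; rewrite !traction_normal => normalE.
have -> : qp - qm = 2 * mup * dotv n (Gp *m n) - 2 * mum * dotv n (Gm *m n) by lra.
have := normal_strain_sqr_le Gp; have := normal_strain_sqr_le Gm.
set a := dotv n (Gp *m n); set b := dotv n (Gm *m n).
have := sqr_ge0 (mup * a + mum * b); have := sqr_ge0 mup; have := sqr_ge0 mum; nra.
Qed.

Lemma interface_jump_const_le : (Gp - Gm) *m t = 0 -> \tr Gp = \tr Gm ->
  (qp - qm) ^+ 2 <= jump_const mup mum * frob2 Gp.
Proof.
move=> Dt0 trE; have := interface_frob2_le Dt0 trE.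
have := sqr_ge0 (1 - mup / mum); have := sqr_ge0 (1 - mum / mup).
rewrite /jump_const; move: (_ ^+ 2) (_ ^+ 2) => s2 s1 s2_ge0 s1_ge0 FmFp.
have := frob2_ge0 Gp; have := sqr_ge0 mup; have := sqr_ge0 mum => mum2 mup2 Fp_ge0.
have mupFp : 8 * mup ^+ 2 * frob2 Gp <= 8 * mup ^+ 2 * (2 + 4 * (s1 + s2)) * frob2 Gp.
  have : 0 <= mup ^+ 2 * frob2 Gp * (1 + 4 * (s1 + s2)).
    by apply: mulr_ge0; [exact: mulr_ge0 | lra].
  lra.
have mumFm : 8 * mum ^+ 2 * frob2 Gm <= 8 * mum ^+ 2 * (2 + 4 * (s1 + s2)) * frob2 Gp.
  have : 0 <= mum ^+ 2 * ((2 + 4 * (s1 + s2)) * frob2 Gp - frob2 Gm).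
    by apply: mulr_ge0 => //; nra.
  lra.
by apply: le_trans interface_jump_sqr_le _; lra.
Qed.

End OrthonormalFrame.

Lemma oseg_affine_eq (R : realType) m (p q : 'cV[R]_2) (A B : 'M[R]_(m, 2)) (w w' : 'cV[R]_m) :
  (forall x, oseg p q x -> A *m x + w = B *m x + w') -> (A - B) *m (q - p) = 0.
Proof.
move=> affE.
have diffE t : 0 < t < 1 -> (A - B) *m ((1 - t) *: p + t *: q) = w' - w.
  move=> t01; rewrite mulmxBl; apply: (addIr w).
  by rewrite subrK addrAC affE; [rewrite addrC addKr | exists t].
have half : 0 < (2^-1 : R) < 1 by apply/andP; split; lra.
have quarter : 0 < (4^-1 : R) < 1 by apply/andP; split; lra.
have : (A - B) *m (4^-1 *: (q - p)) = 0.
  have -> : 4^-1 *: (q - p) = ((1 - 2^-1) *: p + 2^-1 *: q) - ((1 - 4^-1) *: p + 4^-1 *: q).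
    by apply: cV2P; rewrite !coordE; field.
  by rewrite mulmxBr (diffE _ half) (diffE _ quarter) subrr.
by rewrite -scalemxAr => /eqP; rewrite scaler_eq0 invr_eq0 pnatr_eq0 => /eqP.
Qed.

Lemma IFE_jump_sqr_le (R : realType) (mup mum : R) p q Gp wp qp Gm wm qm :
  0 < mup -> 0 < mum -> p != q -> IFE mup mum p q Gp wp qp Gm wm qm ->
  (qp - qm) ^+ 2 <= jump_const mup mum * frob2 Gp /\
  (qp - qm) ^+ 2 <= jump_const mup mum * frob2 Gm.
Proof.
move=> mup_gt0 mum_gt0 pq [tractionE contE trE].
have n_unit := dotv_nrm pq.
have Dt0 : (Gp - Gm) *m rot (nrm p q) = 0.
  by rewrite rot_nrm -scalemxAr (oseg_affine_eq contE) scaler0.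
split; first exact: (interface_jump_const_le n_unit mum_gt0 tractionE Dt0 trE).
rewrite jump_constC -sqrrN opprB.
apply: (interface_jump_const_le n_unit mup_gt0 (esym tractionE) _ (esym trE)).
by rewrite -opprB mulNmx Dt0 oppr0.
Qed.

Definition cross (R : realType) (u v : 'cV[R]_2) : R := xc u * yc v - yc u * xc v.
(* Barycentric coordinate of [x] attached to the vertex [a]; cycling the vertices gives
   the other two. *)
Definition bary (R : realType) (a b c x : 'cV[R]_2) : R := tri_det x b c / tri_det a b c.
Definition centroid (R : realType) (a b c : 'cV[R]_2) : 'cV[R]_2 := 3^-1 *: (a + b + c).

Section Triangle.
Variable R : realType.
Implicit Types (a b c u v x : 'cV[R]_2).

Lemma cross_le u v : `|cross u v| <= normv u * normv v.
Proof.
have lagrange : cross u v ^+ 2 + dotv u v ^+ 2 = (normv u * normv v) ^+ 2.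
  by rewrite exprMn !normv_sqr /cross /dotv; ring.
rewrite -sqrtr_sqr -[X in _ <= X]ger0_norm ?mulr_ge0 ?normv_ge0 // -sqrtr_sqr.
by apply: ler_wsqrtr; rewrite -lagrange lerDl sqr_ge0.
Qed.

Lemma tri_det_cycle a b c : tri_det b c a = tri_det a b c.
Proof. by rewrite /tri_det !coordE; ring. Qed.

Lemma tri_nondeg_cycle a b c : tri_nondeg a b c -> tri_nondeg b c a.
Proof. by rewrite /tri_nondeg [tri_det b c a]tri_det_cycle. Qed.

Lemma centroid_cycle a b c : centroid b c a = centroid a b c.
Proof. by rewrite /centroid addrC addrA. Qed.

Lemma inradius_cycle a b c : inradius b c a = inradius a b c.
Proof. by rewrite /inradius tri_det_cycle addrC addrA. Qed.

End Triangle.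

Section Nondegenerate.
Variable R : realType.
Variables a b c : 'cV[R]_2.
Hypothesis abc : tri_nondeg a b c.

Lemma bary_comb (l1 l2 l3 : R) : l1 + l2 + l3 = 1 ->
  bary a b c (l1 *: a + l2 *: b + l3 *: c) = l1.
Proof.
move=> l123; rewrite /bary; apply: (mulIf abc); rewrite mulfVK //.
have -> : l1 = 1 - l2 - l3 by lra.
by rewrite /tri_det !coordE; ring.
Qed.

Lemma bary_decomp x : bary a b c x + bary b c a x + bary c a b x = 1 /\
  x = bary a b c x *: a + bary b c a x *: b + bary c a b x *: c.
Proof.
have D0 := abc; rewrite /tri_nondeg /tri_det !coordE in D0.
rewrite /bary [tri_det c a b]tri_det_cycle [tri_det b c a]tri_det_cycle /tri_det !coordE.
split; last apply: cV2P; rewrite ?coordE; by field.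
Qed.
End Nondegenerate.

Lemma tri_bary (R : realType) (a b c x : 'cV[R]_2) : tri_nondeg a b c ->
  tri a b c x <-> [/\ 0 < bary a b c x, 0 < bary b c a x & 0 < bary c a b x].
Proof.
move=> abc; have bca := tri_nondeg_cycle abc; have cab := tri_nondeg_cycle bca.
split=> [[l1 [l2 [l3 [l1_gt0 l2_gt0 l3_gt0 l123 ->]]]] | [la lb lc]].
  rewrite bary_comb //; split=> //.
    by rewrite -addrA addrC bary_comb //; lra.
  by rewrite addrC addrA bary_comb //; lra.
have [l123 xE] := bary_decomp abc x.
by exists (bary a b c x), (bary b c a x), (bary c a b x).
Qed.

Section Centroid.
Variable R : realType.
Variables a b c : 'cV[R]_2.
Hypothesis abc : tri_nondeg a b c.
Local Notation perimeter := (normv (b - a) + normv (c - b) + normv (a - c)).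

Lemma perimeter_gt0 : 0 < perimeter.
Proof.
have := normv_ge0 (b - a); have := normv_ge0 (c - b); have := normv_ge0 (a - c).
move=> nca ncb nba; rewrite lt_def addr_ge0 ?addr_ge0 // andbT.
apply: contra abc => /eqP P0; rewrite -normr_eq0 eq_le normr_ge0 andbT.
apply: le_trans (cross_le (b - a) (c - a)) _.
by rewrite (normv_distC c a) (_ : normv (b - a) = 0) ?mul0r //; apply/eqP; rewrite eq_le; lra.
Qed.

Lemma inradius_gt0 : 0 < inradius a b c.
Proof. by rewrite divr_gt0 ?perimeter_gt0 // normr_gt0. Qed.

Lemma bary_centroid x :
  bary a b c x = 3^-1 + cross (c - b) (x - centroid a b c) / tri_det a b c.
Proof.
have D0 := abc; rewrite /tri_nondeg /tri_det !coordE in D0.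
by rewrite /bary /cross /centroid /tri_det !coordE; field.
Qed.

Lemma bary_gt0_near_centroid x :
  normv (x - centroid a b c) < inradius a b c / 3 -> 0 < bary a b c x.
Proof.
move=> near; rewrite bary_centroid.
have absD : `|tri_det a b c| = inradius a b c * perimeter.
  by rewrite /inradius divfK // lt0r_neq0 // perimeter_gt0.
have : `|cross (c - b) (x - centroid a b c) / tri_det a b c| < 3^-1.
  rewrite normrM normrV ?unitfE // ltr_pdivrMr ?normr_gt0 // absD.
  apply: le_lt_trans (cross_le _ _) _.
  have : normv (c - b) <= perimeter.
    by have := normv_ge0 (b - a); have := normv_ge0 (a - c); lra.
  have := normv_ge0 (c - b); have := normv_ge0 (x - centroid a b c).
  have := perimeter_gt0; nra.
by rewrite ltr_norml; lra.
Qed.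
End Centroid.

Lemma tri_near_centroid (R : realType) (a b c x : 'cV[R]_2) : tri_nondeg a b c ->
  normv (x - centroid a b c) < inradius a b c / 3 -> tri a b c x.
Proof.
move=> abc near; have bca := tri_nondeg_cycle abc; have cab := tri_nondeg_cycle bca.
apply/tri_bary => //; split; apply: bary_gt0_near_centroid => //.
  by rewrite centroid_cycle inradius_cycle.
by rewrite -centroid_cycle -inradius_cycle.
Qed.

Section Boundary.
Variable R : realType.
Implicit Types (a b c u v x y : 'cV[R]_2).

Lemma normv_convex_le u v (t d : R) : 0 <= t <= 1 ->
  normv u <= d -> normv v <= d -> normv ((1 - t) *: u + t *: v) <= d.
Proof.
move=> /andP[t_ge0 t_le1] nu nv; have d_ge0 := le_trans (normv_ge0 u) nu.
apply: normv_le => //.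
have -> : dotv ((1 - t) *: u + t *: v) ((1 - t) *: u + t *: v) =
    (1 - t) * dotv u u + t * dotv v v - t * (1 - t) * dotv (u - v) (u - v).
  by rewrite /dotv !coordE; ring.
have uu : dotv u u <= d ^+ 2 by rewrite -normv_sqr ler_sqr ?nnegrE ?normv_ge0.
have vv : dotv v v <= d ^+ 2 by rewrite -normv_sqr ler_sqr ?nnegrE ?normv_ge0.
have : 0 <= t * (1 - t) * dotv (u - v) (u - v) by rewrite !mulr_ge0 ?dotv_ge0 ?subr_ge0.
have : (1 - t) * dotv u u <= (1 - t) * d ^+ 2 by rewrite ler_wpM2l ?subr_ge0.
have : t * dotv v v <= t * d ^+ 2 by rewrite ler_wpM2l.
lra.
Qed.

Lemma normv_cseg_le u v x y (d : R) : cseg u v x ->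
  normv (u - y) <= d -> normv (v - y) <= d -> normv (x - y) <= d.
Proof.
move=> [t [t01 ->]].
have -> : (1 - t) *: u + t *: v - y = (1 - t) *: (u - y) + t *: (v - y).
  by apply: cV2P; rewrite !coordE; ring.
exact: normv_convex_le.
Qed.

Lemma normv_tri_bd_le a b c x y (d : R) :
  normv (a - y) <= d -> normv (b - y) <= d -> normv (c - y) <= d ->
  tri_bd a b c x -> normv (x - y) <= d.
Proof. by move=> ay by' cy [[]|] /normv_cseg_le; apply. Qed.

Lemma tri_bd_dist_le a b c x y :
  tri_bd a b c x -> tri_bd a b c y -> normv (x - y) <= diam a b c.
Proof.
have edge u v : [\/ u = a, u = b | u = c] -> [\/ v = a, v = b | v = c] ->
    normv (u - v) <= diam a b c.
  have diam_ge0 : 0 <= diam a b c by rewrite /diam !le_max normv_ge0.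
  rewrite /diam; case=> -> [] ->; rewrite ?subrr ?normv0 //;
    rewrite ?(normv_distC a b) ?(normv_distC b c) ?(normv_distC c a) !le_max lexx ?orbT //.
move=> bx by'; apply: normv_tri_bd_le bx; rewrite normv_distC;
  by apply: normv_tri_bd_le by'; apply: edge; constructor.
Qed.
End Boundary.

Section Area.
Variable R : realType.
Implicit Types (a b c p q w x : 'cV[R]_2).

Lemma measurable_affine_gt0 (f : 'cV[R]_2 -> R) w (s : R) :
  (forall x, f x = dotv w x + s) -> measurable [set z : R * R | 0 < f (mkv z.1 z.2)].
Proof.
move=> fE.
have mf : measurable_fun setT (fun z : R * R => xc w * z.1 + yc w * z.2 + s).
  apply: measurable_funD; last exact: measurable_cst.
  by apply: measurable_funD; apply: measurable_funM;
    [exact: measurable_cst | exact: measurable_fst | exact: measurable_cst | exact: measurable_snd].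
have := mf measurableT _ (measurable_itv `]0, +oo[); rewrite setTI.
by congr measurable; apply/seteqP; split=> z /=; rewrite in_itv /= andbT fE /dotv !coordE.
Qed.

Lemma bary_affine a b c x :
  bary a b c x = dotv ((tri_det a b c)^-1 *: rot (c - b)) x + cross b c / tri_det a b c.
Proof. by rewrite /bary /dotv /rot /cross /tri_det !coordE; ring. Qed.

Lemma measurable_Tplus a b c p q : tri_nondeg a b c ->
  measurable [set z : R * R | Tplus a b c p q (mkv z.1 z.2)].
Proof.
move=> abc.
have -> : [set z : R * R | Tplus a b c p q (mkv z.1 z.2)] =
    [set z | 0 < bary a b c (mkv z.1 z.2)] `&` [set z | 0 < bary b c a (mkv z.1 z.2)] `&`
    [set z | 0 < bary c a b (mkv z.1 z.2)] `&`
    [set z | 0 < dotv (mkv z.1 z.2 - p) (nrm p q)].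
  apply/seteqP; split=> z /=.
    by case=> /(tri_bary _ abc) [la lb lc] ln; do !split.
  by case=> -[[la lb] lc] ln; split; first exact/(tri_bary _ abc).
do !apply: measurableI.
- exact: measurable_affine_gt0 (bary_affine a b c).
- exact: measurable_affine_gt0 (bary_affine b c a).
- exact: measurable_affine_gt0 (bary_affine c a b).
- apply: (measurable_affine_gt0 (f := fun x => dotv (x - p) (nrm p q)) (w := nrm p q)
    (s := - dotv p (nrm p q))) => x.
  by rewrite /dotv !coordE; ring.
Qed.

Lemma lebesgue_rect (l1 l2 d1 d2 : R) : 0 < d1 -> 0 < d2 ->
  ((@lebesgue_measure R) \x (@lebesgue_measure R))%E
    (`]l1, l1 + d1[ `*` `]l2, l2 + d2[) = (d1 * d2)%:E.
Proof.
have itvE l d : 0 < d -> (@lebesgue_measure R) `]l, l + d[ = d%:E.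
  by move=> d_gt0; rewrite lebesgue_measure_itv /= lte_fin ltrDl d_gt0 -EFinD addrAC subrr add0r.
move=> d1_gt0 d2_gt0; rewrite product_measure1E ?measurable_itv //.
by transitivity (d1%:E * d2%:E)%E; first by congr (_ * _)%E; apply: itvE.
Qed.

Lemma tri_bounded a b c : exists K : R, forall x, tri a b c x -> `|xc x| < K /\ `|yc x| < K.
Proof.
have convex3 (l1 l2 l3 x1 x2 x3 : R) : 0 < l1 -> 0 < l2 -> 0 < l3 -> l1 + l2 + l3 = 1 ->
    `|l1 * x1 + l2 * x2 + l3 * x3| <= `|x1| + `|x2| + `|x3|.
  move=> l1_gt0 l2_gt0 l3_gt0 l123.
  have term l y : 0 < l <= 1 -> `|l * y| <= `|y|.
    by case/andP=> l_gt0 l_le1; rewrite normrM ger0_norm ?ler_piMl // ltW.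
  apply: le_trans (ler_normD _ _) _; apply: lerD; last by apply: term; lra.
  by apply: le_trans (ler_normD _ _) _; apply: lerD; apply: term; lra.
exists (`|xc a| + `|xc b| + `|xc c| + `|yc a| + `|yc b| + `|yc c| + 1).
move=> _ [l1 [l2 [l3 [l1_gt0 l2_gt0 l3_gt0 l123 ->]]]]; rewrite !coordE.
have := convex3 _ _ _ (xc a) (xc b) (xc c) l1_gt0 l2_gt0 l3_gt0 l123.
have := convex3 _ _ _ (yc a) (yc b) (yc c) l1_gt0 l2_gt0 l3_gt0 l123.
have := normr_ge0 (xc a); have := normr_ge0 (xc b); have := normr_ge0 (xc c).
have := normr_ge0 (yc a); have := normr_ge0 (yc b); have := normr_ge0 (yc c).
lra.
Qed.

Lemma area_ge0 (S : set 'cV[R]_2) : 0 <= area S.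
Proof. exact/fine_ge0/measure_ge0. Qed.

Lemma area_ge_square (S : set 'cV[R]_2) (K l1 l2 e : R) : 0 < e ->
  measurable [set z : R * R | S (mkv z.1 z.2)] ->
  (forall x, S x -> `|xc x| < K /\ `|yc x| < K) ->
  (forall u v, l1 < u < l1 + e -> l2 < v < l2 + e -> S (mkv u v)) ->
  e ^+ 2 <= area S.
Proof.
move=> e_gt0 mS SK sqS.
have inner : l1 < l1 + e / 2 < l1 + e /\ l2 < l2 + e / 2 < l2 + e.
  by split; apply/andP; split; lra.
have K_gt0 : 0 < K.
  have [/andP[u1 u2] /andP[v1 v2]] := inner.
  have [+ _] := SK _ (sqS _ _ inner.1 inner.2).
  by have := normr_ge0 (xc (mkv (l1 + e / 2) (l2 + e / 2))); lra.
have mrect (a1 a2 d1 d2 : R) : measurable (`]a1, a1 + d1[ `*` `]a2, a2 + d2[).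
  by apply: measurableX; exact: measurable_itv.
have square_sub : `]l1, l1 + e[ `*` `]l2, l2 + e[ `<=` [set z : R * R | S (mkv z.1 z.2)].
  by case=> u v [/= u_in v_in]; apply: sqS; rewrite -?in_itv.
have box_sup : [set z : R * R | S (mkv z.1 z.2)] `<=`
    `](- K), - K + (K + K)[ `*` `](- K), - K + (K + K)[.
  case=> u v /SK /=; rewrite !coordE !in_itv /= => -[]; rewrite !ltr_norml.
  by move=> /andP[? ?] /andP[? ?]; split=> /=; apply/andP; split; lra.
have lo : ((e * e)%:E <= lam2 S)%E.
  by rewrite -(lebesgue_rect l1 l2) //; apply: le_measure; rewrite ?inE //; apply: mrect.
have hi : (lam2 S <= ((K + K) * (K + K))%:E)%E.
  rewrite -(lebesgue_rect (- K) (- K)) ?addr_gt0 //.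
  by apply: le_measure; rewrite ?inE //; apply: mrect.
have fin : lam2 S \is a fin_num.
  rewrite ge0_fin_numE; first exact: le_lt_trans hi (ltry _).
  by apply: le_trans _ lo; rewrite lee_fin mulr_ge0 // ltW.
by rewrite /area expr2 -lee_fin fineK.
Qed.

Lemma one_sided_interval (n g e : R) : 0 < e -> exists l : R, forall u, l < u < l + e ->
  [/\ (u - g) ^+ 2 < e ^+ 2, 0 <= n * (u - g) & n != 0 -> 0 < n * (u - g)].
Proof.
move=> e_gt0; exists (if 0 <= n then g else g - e) => u.
have [n_sign | n_sign] := leP 0 n => /andP[lo hi].
  have d_gt0 : 0 < u - g by lra.
  have : 0 < (e - (u - g)) * (e + (u - g)) by rewrite mulr_gt0 //; lra.
  split; [lra | by rewrite mulr_ge0 // ltW | move=> n0].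
  by rewrite mulr_gt0 // lt_def n0.
have d_lt0 : u - g < 0 by lra.
have : 0 < (e - (u - g)) * (e + (u - g)) by rewrite mulr_gt0 //; lra.
by split; [lra | rewrite ltW // nmulr_rgt0 | rewrite nmulr_rgt0].
Qed.

Lemma area_Tplus_ge a b c p q : tri_nondeg a b c -> p != q ->
  0 <= dotv (centroid a b c - p) (nrm p q) ->
  (inradius a b c / 6) ^+ 2 <= area (Tplus a b c p q).
Proof.
move=> abc pq g_side; have := dotv_nrm pq.
set n := nrm p q; set g := centroid a b c; set e := inradius a b c / 6 => n_unit.
have e_gt0 : 0 < e by rewrite divr_gt0 ?inradius_gt0.
have [l1 sq1] := one_sided_interval (xc n) (xc g) e_gt0.
have [l2 sq2] := one_sided_interval (yc n) (yc g) e_gt0.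
have [K triK] := tri_bounded a b c.
apply: (area_ge_square (K := K) (l1 := l1) (l2 := l2) e_gt0 (measurable_Tplus _ _ abc)).
  by move=> x [/triK].
move=> u v /sq1[du s1 s1'] /sq2[dv s2 s2']; split.
  apply: tri_near_centroid => //; apply: normv_lt; first by rewrite divr_gt0 ?inradius_gt0.
  rewrite /dotv xcD ycD xcN ycN xc_mkv yc_mkv -!expr2.
  rewrite (_ : inradius a b c / 3 = 2 * e); last by rewrite /e; field.
  nra.
have -> : dotv (mkv u v - p) n = dotv (g - p) n + xc n * (u - xc g) + yc n * (v - yc g).
  by rewrite /dotv !(xcD, ycD, xcN, ycN, xc_mkv, yc_mkv); ring.
have [xn0 | xn_neq0] := eqVneq (xc n) 0; last by have := s1' xn_neq0; lra.
have yn_neq0 : yc n != 0.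
  by apply: contra_eq_neq n_unit => yn0; rewrite /dotv xn0 yn0 mul0r addr0 eq_sym oner_neq0.
by have := s2' yn_neq0; lra.
Qed.

Lemma Tminus_Tplus a b c p q : Tminus a b c p q = Tplus a b c q p.
Proof.
by apply/seteqP; split=> x [tx side]; split=> //; move: side; rewrite dotv_nrmC; lra.
Qed.

Lemma subelement_area_ge a b c p q : tri_nondeg a b c -> p != q ->
  (inradius a b c / 6) ^+ 2 <= area (Tplus a b c p q) \/
  (inradius a b c / 6) ^+ 2 <= area (Tminus a b c p q).
Proof.
move=> abc pq; have [g_side | g_side] := leP 0 (dotv (centroid a b c - p) (nrm p q)).
  by left; apply: area_Tplus_ge.
right; rewrite Tminus_Tplus; apply: area_Tplus_ge; rewrite 1?eq_sym //.
by rewrite dotv_nrmC; lra.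
Qed.
End Area.

Lemma scaled_jump_le (R : realType) (h L J K F A A' F' r rho : R) :
  0 <= L <= h -> h <= rho * r -> 0 <= J <= K * F -> (r / 6) ^+ 2 <= A ->
  0 <= F -> 0 <= K -> 0 <= A' * F' ->
  h * (L * J) <= (36 * rho ^+ 2 * K + 1) * (A * F + A' * F').
Proof.
move=> /andP[L_ge0 Lh] hr /andP[J_ge0 JKF] rA F_ge0 K_ge0 AF'_ge0.
have h_ge0 : 0 <= h by apply: le_trans Lh.
have c_ge0 : 0 <= 36 * rho ^+ 2 * K by rewrite mulr_ge0 // mulr_ge0 ?sqr_ge0.
have hL : h * L <= (rho * r) ^+ 2 by have := le_trans Lh hr; nra.
have step1 : h * (L * J) <= (rho * r) ^+ 2 * J by rewrite mulrA ler_wpM2r.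
have step2 : (rho * r) ^+ 2 * J <= (rho * r) ^+ 2 * (K * F) by rewrite ler_wpM2l ?sqr_ge0.
have step3 : (rho * r) ^+ 2 * (K * F) = 36 * rho ^+ 2 * K * F * (r / 6) ^+ 2 by field.
have step4 : 36 * rho ^+ 2 * K * F * (r / 6) ^+ 2 <= 36 * rho ^+ 2 * K * F * A.
  by rewrite ler_wpM2l // mulr_ge0.
have : 0 <= A * F by apply: mulr_ge0 => //; apply: le_trans rA; exact: sqr_ge0.
have := mulr_ge0 c_ge0 AF'_ge0.
lra.
Qed.

Theorem lemma5p6 (R : realType) (rho mup mum : R) :
  0 < mup -> 0 < mum ->
  exists C : R, 0 < C /\
    forall a b c p1 p2 : 'cV[R]_2,
      tri_nondeg a b c ->
      diam a b c <= rho * inradius a b c ->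
      tri_bd a b c p1 -> tri_bd a b c p2 -> p1 != p2 ->
      Tplus a b c p1 p2 !=set0 -> Tminus a b c p1 p2 !=set0 ->
      forall (Gp : 'M[R]_2) (wp : 'cV[R]_2) (qp : R)
             (Gm : 'M[R]_2) (wm : 'cV[R]_2) (qm : R),
        IFE mup mum p1 p2 Gp wp qp Gm wm qm ->
        diam a b c * jumpL2sq p1 p2 qp qm <= C * H1semi2 a b c p1 p2 Gp Gm.
Proof.
move=> mup_gt0 mum_gt0; set K := jump_const mup mum.
have K_ge0 : 0 <= K := jump_const_ge0 mup mum.
exists (36 * rho ^+ 2 * K + 1); split.
  by have := mulr_ge0 (mulr_ge0 (ler0n _ 36) (sqr_ge0 rho)) K_ge0; lra.
move=> a b c p q abc diam_le p_bd q_bd pq _ _ Gp wp qp Gm wm qm ife.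
have [jump_p jump_m] := IFE_jump_sqr_le mup_gt0 mum_gt0 pq ife.
have Gamma_le : 0 <= normv (q - p) <= diam a b c.
  by rewrite normv_ge0 tri_bd_dist_le.
have jump_ge0 := sqr_ge0 (qp - qm).
rewrite /jumpL2sq /H1semi2.
have [area_p | area_m] := subelement_area_ge abc pq.
  apply: scaled_jump_le Gamma_le diam_le _ area_p (frob2_ge0 _) K_ge0 _.
    by rewrite jump_ge0 jump_p.
  by rewrite mulr_ge0 ?area_ge0 ?frob2_ge0.
rewrite (addrC (area (Tplus _ _ _ _ _) * _)).
apply: scaled_jump_le Gamma_le diam_le _ area_m (frob2_ge0 _) K_ge0 _.
  by rewrite jump_ge0 jump_m.
by rewrite mulr_ge0 ?area_ge0 ?frob2_ge0.
Qed.
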